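(* (1) Let $M$ and $M'$ be $R$-modules with $W_R(M)\subseteq W_R(M')$. If $M'$ satisfies the dual of Property $\mathcal{A}$ (respectively, the dual of strong Property $\mathcal{A}$), then $M\oplus M'$ satisfies the dual of Property $\mathcal{A}$ (respectively, the dual of strong Property $\mathcal{A}$). (2) Let $N$ be a small submodule of an $R$-module $M$ (i.e. $X+N=M$ implies $X=M$ for every submodule $X$ of $M$). Then $M$ satisfies the dual of Property $\mathcal{A}$ if and only if $M/N$ does; and $M$ is secondal if and only if $M/N$ is secondal.
   Context: All rings are commutative with identity. For an $R$-module $M$, $W_R(M)=\{r\in R : rM\neq M\}$. An $R$-module $M$ satisfies the dual of Property $\mathcal{A}$ if for every finitely generated ideal $I$ of $R$ with $I\subseteq W_R(M)$ we have $IM\neq M$. A proper submodule $L$ of $M$ is completely irreducible if whenever $L=\bigcap_{i\in I}L_i$ for a family $\{L_i\}_{i\in I}$ of submodules of $M$, then $L=L_i$ for some $i$. An $R$-module $M$ satisfies the dual of strong Property $\mathcal{A}$ if for any $a_1,\dots,a_n\in W_R(M)$ there exists a completely irreducible submodule $L$ of $M$ with $a_iM\subseteq L\neq M$ for all $i=1,\dots,n$. A nonzero $R$-module $N$ is secondal if $W_R(N)$ is an ideal of $R$. *)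

From HB Require Import structures.
From mathcomp Require Import all_boot all_order all_algebra.
Set Implicit Arguments. Unset Strict Implicit. Unset Printing Implicit Defensive.
Import Order.TTheory GRing.Theory.
Local Open Scope ring_scope.

Section Defs.
Variable R : comPzRingType.

Definition submodule (M : lmodType R) (S : M -> Prop) : Prop :=
  [/\ S 0, (forall x y, S x -> S y -> S (x + y)) & (forall r x, S x -> S (r *: x))].

Definition W (M : lmodType R) (r : R) : Prop :=
  ~ (forall m : M, exists x : M, r *: x = m).

Definition ideal_gen (s : seq R) (r : R) : Prop :=
  exists c : seq R, r = \sum_(i < size s) c`_i * s`_i.

Definition idealM (M : lmodType R) (I : R -> Prop) (x : M) : Prop :=
  exists rs : seq (R * M), (forall p, p \in rs -> I p.1) /\
    x = \sum_(p <- rs) p.1 *: p.2.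

Definition dual_A (M : lmodType R) : Prop :=
  forall s : seq R, (forall r, ideal_gen s r -> W M r) ->
    ~ (forall m : M, @idealM M (ideal_gen s) m).

Definition completely_irreducible (M : lmodType R) (L : M -> Prop) : Prop :=
  submodule L /\ (exists m, ~ L m) /\
  forall F : (M -> Prop) -> Prop,
    (forall K, F K -> submodule K) ->
    (forall x, L x <-> (forall K, F K -> K x)) ->
    exists K, F K /\ (forall x, L x <-> K x).

Definition dual_strong_A (M : lmodType R) : Prop :=
  forall s : seq R, (forall a, a \in s -> W M a) ->
    exists L : M -> Prop, completely_irreducible L /\
      (exists m, ~ L m) /\ (forall a, a \in s -> forall m : M, L (a *: m)).

Definition is_ideal (P : R -> Prop) : Prop :=
  [/\ P 0, (forall x y, P x -> P y -> P (x + y)) & (forall r x, P x -> P (r * x))].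

Definition secondal (M : lmodType R) : Prop :=
  (exists x : M, x <> 0) /\ is_ideal (W M).

Definition small_submodule (M : lmodType R) (N : M -> Prop) : Prop :=
  submodule N /\
  forall X : M -> Prop, submodule X ->
    (forall m, exists x n, X x /\ N n /\ m = x + n) -> forall m, X m.

End Defs.

From HB Require Import structures.
From mathcomp Require Import all_boot all_order all_algebra.
From Stdlib Require Import Classical.
Set Implicit Arguments.
Unset Strict Implicit.
Unset Printing Implicit Defensive.
Import GRing.Theory.
Local Open Scope ring_scope.

(* (1) Classically, r M⊕M' = M⊕M' iff r M = M and r M' = M', so W(M⊕M') = W(M) ∪ W(M') = W(M');
   the second projection transports IM⊕M' = M⊕M' to IM' = M', and pulls a completely
   irreducible submodule of M' back to one of M⊕M'.
   (2) Every submodule X with X + N = M is all of M, so surjectivity properties of M and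
   of M/N agree: r M = M iff r(M/N) = M/N, and IM = M iff I(M/N) = M/N; moreover
   M/N = 0 forces N = M, hence M = 0. *)

Section LinearImages.
Variable R : comPzRingType.
Variables (M Q : lmodType R) (f : {linear M -> Q}).

Lemma submodule_image (K : M -> Prop) :
  submodule K -> submodule (fun q => exists m, K m /\ f m = q).
Proof.
move=> [K0 KD KZ]; split.
- by exists 0; rewrite linear0.
- move=> _ _ [x [Kx <-]] [y [Ky <-]].
  by exists (x + y); rewrite linearD; split; first exact: KD.
- move=> r _ [x [Kx <-]].
  by exists (r *: x); rewrite linearZ; split; first exact: KZ.
Qed.

Lemma submodule_preimage (L : Q -> Prop) :
  submodule L -> submodule (fun m => L (f m)).
Proof.
move=> [L0 LD LZ]; split => [|x y Lx Ly|r x Lx]; rewrite ?linear0 ?linearD ?linearZ //.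
- exact: LD.
- exact: LZ.
Qed.

Lemma idealM_submodule (I : R -> Prop) : submodule (@idealM R M I).
Proof.
split.
- by exists [::]; rewrite big_nil.
- move=> _ _ [r1 [I1 ->]] [r2 [I2 ->]]; exists (r1 ++ r2); split; last by rewrite big_cat.
  by move=> p; rewrite mem_cat => /orP [] ?; [apply: I1 | apply: I2].
- move=> r _ [rs [Irs ->]]; exists [seq (p.1, r *: p.2) | p <- rs]; split.
    by move=> q /mapP [p prs ->] /=; apply: Irs.
  by rewrite big_map scaler_sumr; apply: eq_bigr => p _; rewrite !scalerA mulrC.
Qed.

Lemma idealM_linear (I : R -> Prop) x : idealM I x -> idealM I (f x).
Proof.
move=> [rs [Irs ->]]; exists [seq (p.1, f p.2) | p <- rs]; split.
  by move=> q /mapP [p prs ->] /=; apply: Irs.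
by rewrite linear_sum big_map; apply: eq_bigr => p _; rewrite linearZ.
Qed.

Hypothesis f_onto : forall q : Q, exists m : M, f m = q.

Lemma idealM_lift (I : R -> Prop) q :
  idealM I q -> exists x, idealM I x /\ f x = q.
Proof.
move=> [rs [Irs ->]]; elim: rs Irs => [|p rs IHrs] Irs.
  by exists 0; rewrite linear0 big_nil; split => //; exists [::]; rewrite big_nil.
have [x [Ix fx]] : exists x, idealM I x /\ f x = \sum_(p <- rs) p.1 *: p.2.
  by apply: IHrs => p' p'rs; apply: Irs; rewrite inE p'rs orbT.
have [y fy] := f_onto p.2.
exists (p.1 *: y + x); split; last by rewrite big_cons linearD linearZ fx fy.
have [_ ID _] := idealM_submodule I; apply: ID => //.
exists [:: (p.1, y)]; rewrite big_seq1; split => // p'.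
by rewrite inE => /eqP ->; apply: Irs; rewrite inE eqxx.
Qed.

Lemma completely_irreducible_preimage (L : Q -> Prop) :
  completely_irreducible L -> completely_irreducible (fun m => L (f m)).
Proof.
move=> [subL [[q0 Lq0] irrL]]; have [L0 _ _] := subL.
split; first exact: submodule_preimage.
split; first by have [m0 fm0] := f_onto q0; exists m0; rewrite fm0.
move=> F subF Lcap.
(* The members of F contain ker f, so each is the preimage of its image. *)
have saturated K m m' : F K -> K m' -> f m = f m' -> K m.
  move=> FK Km' fmm'; have [_ KD _] := subF K FK.
  have Kd : K (m - m') by apply: (Lcap (m - m')).1 FK; rewrite linearB fmm' subrr.
  by have := KD _ _ Km' Kd; rewrite addrC subrK.
pose image K q := exists m, K m /\ f m = q.
have [_ [[K [FK ->]] LK]] :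
    exists K', (exists K, F K /\ K' = image K) /\ forall q, L q <-> K' q.
  apply: irrL => [_ [K [FK ->]]|q]; first exact/submodule_image/subF.
  have [m <-] := f_onto q; split.
    by move=> Lfm _ [K [FK ->]]; exists m; split => //; apply: (Lcap m).1.
  move=> Fm; apply/(Lcap m) => K FK.
  have [m' [Km' fm'm]] := Fm _ (ex_intro _ K (conj FK erefl)).
  exact: (saturated K m m' FK Km' (esym fm'm)).
exists K; split => // m; rewrite LK; split => [[m' [Km' fm'm]]|Km].
  exact: (saturated K m m' FK Km' (esym fm'm)).
by exists m.
Qed.

End LinearImages.

Section DirectSum.
Variable R : comPzRingType.
Variables M M' : lmodType R.

Lemma W_prod r : W (M * M')%type r <-> W M r \/ W M' r.
Proof.
split=> [WMM'|[WM|WM'] ontoMM'].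
- apply: NNPP => /not_or_and [/NNPP ontoM /NNPP ontoM'].
  apply: WMM' => -[m m']; have [x <-] := ontoM m; have [x' <-] := ontoM' m'.
  by exists (x, x').
- by apply: WM => m; have [[x _] [<- _]] := ontoMM' (m, 0); exists x.
- by apply: WM' => m'; have [[_ x'] [_ <-]] := ontoMM' (0, m'); exists x'.
Qed.

Hypothesis WMM' : forall r, W M r -> W M' r.

Lemma W_prod_sub r : W (M * M')%type r -> W M' r.
Proof. by move=> /W_prod [/WMM'|]. Qed.

Lemma dual_A_prod : dual_A M' -> dual_A (M * M')%type.
Proof.
move=> AM' s sW IMM'; apply: (AM' s) => [r /sW /W_prod_sub //|m'].
exact: (idealM_linear (snd : {linear (M * M')%type -> M'}) (IMM' (0, m'))).
Qed.

Lemma dual_strong_A_prod : dual_strong_A M' -> dual_strong_A (M * M')%type.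
Proof.
move=> AM' s sW.
have [L [irrL [_ sL]]] := AM' s (fun a sa => W_prod_sub (sW a sa)).
have irrL2 := completely_irreducible_preimage (f := snd : {linear (M * M')%type -> M'})
  (fun m' => ex_intro _ (0, m') erefl) irrL.
exists (fun p => L p.2); split => //; split; first exact: irrL2.2.1.
by move=> a sa [m m']; apply: sL.
Qed.

End DirectSum.

Lemma is_ideal_ext (R : comPzRingType) (P P' : R -> Prop) :
  (forall r, P r <-> P' r) -> is_ideal P -> is_ideal P'.
Proof.
move=> PP' [P0 PD PM]; split.
- exact/PP'.
- by move=> x y /PP' Px /PP' Py; apply/PP'/PD.
- by move=> r x /PP' Px; apply/PP'/PM.
Qed.

Section SmallQuotient.
Variable R : comPzRingType.
Variables (M Q : lmodType R) (N : M -> Prop) (f : {linear M -> Q}).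
Hypotheses (smallN : small_submodule N) (f_onto : forall q : Q, exists m : M, f m = q)
  (kerf : forall m : M, f m = 0 <-> N m).

Lemma small_submodule_cover (X : M -> Prop) : submodule X ->
  (forall m, exists x, X x /\ f x = f m) -> forall m, X m.
Proof.
move=> subX Xcover; apply: (smallN.2 _ subX) => m.
have [x [Xx fxm]] := Xcover m.
exists x, (m - x); split => //; split; last by rewrite addrC subrK.
by apply/kerf; rewrite linearB fxm subrr.
Qed.

Lemma scale_onto_small_quotient r :
  (forall m : M, exists x, r *: x = m) <-> (forall q : Q, exists y, r *: y = q).
Proof.
split=> [ontoM q|ontoQ].
  have [m <-] := f_onto q; have [x <-] := ontoM m.
  by exists (f x); rewrite linearZ.
apply: small_submodule_cover.
  split.
  - by exists 0; rewrite scaler0.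
  - by move=> _ _ [x <-] [y <-]; exists (x + y); rewrite scalerDr.
  - by move=> a _ [x <-]; exists (a *: x); rewrite !scalerA mulrC.
move=> m; have [y ryfm] := ontoQ (f m); have [x fxy] := f_onto y.
by exists (r *: x); split; [exists x | rewrite linearZ fxy].
Qed.

Lemma W_small_quotient r : W M r <-> W Q r.
Proof. by rewrite /W scale_onto_small_quotient. Qed.

Lemma idealM_small_quotient (I : R -> Prop) :
  (forall m : M, idealM I m) <-> (forall q : Q, idealM I q).
Proof.
split=> [IM q|IQ].
  by have [m <-] := f_onto q; apply: idealM_linear.
apply: small_submodule_cover; first exact: idealM_submodule.
move=> m; have [x [Ix fx]] := idealM_lift f_onto (IQ (f m)).
by exists x.
Qed.

Lemma small_submodule_proper : (exists m : M, m <> 0) -> exists m, ~ N m.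
Proof.
move=> [m m0]; apply: NNPP => /not_ex_not_all Nall; apply: m0.
have sub0 : submodule (fun x : M => x = 0).
  by split => [|_ _ -> ->|a _ ->]; rewrite ?addr0 ?scaler0.
by apply: (smallN.2 _ sub0) => m'; exists 0, m'; rewrite add0r.
Qed.

Lemma nonzero_small_quotient : (exists m : M, m <> 0) <-> (exists q : Q, q <> 0).
Proof.
split=> [/small_submodule_proper [m Nm]|[q q0]].
  by exists (f m) => /kerf.
by have [m fmq] := f_onto q; exists m => m0; apply: q0; rewrite -fmq m0 linear0.
Qed.

Lemma dual_A_small_quotient : dual_A M <-> dual_A Q.
Proof.
split=> A s sW I_onto; apply: (A s).
- by move=> r /sW /W_small_quotient.
- exact/idealM_small_quotient.
- by move=> r /sW /W_small_quotient.
- exact/idealM_small_quotient.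
Qed.

Lemma secondal_small_quotient : secondal M <-> secondal Q.
Proof.
split=> -[nz idW]; split.
- exact/nonzero_small_quotient.
- by apply: is_ideal_ext idW => r; rewrite W_small_quotient.
- exact/nonzero_small_quotient.
- by apply: is_ideal_ext idW => r; rewrite W_small_quotient.
Qed.

End SmallQuotient.

Theorem theorem2p12 (R : comPzRingType) :
  (forall (M M' : lmodType R),
     (forall r, W M r -> W M' r) ->
     (dual_A M' -> dual_A (M * M')%type) /\
     (dual_strong_A M' -> dual_strong_A (M * M')%type)) /\
  (forall (M : lmodType R) (N : M -> Prop) (Q : lmodType R) (f : {linear M -> Q}),
     small_submodule N ->
     (forall q : Q, exists m : M, f m = q) ->
     (forall m : M, f m = 0 <-> N m) ->
     (dual_A M <-> dual_A Q) /\ (secondal M <-> secondal Q)).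
Proof.
split=> [M M' WMM'|M N Q f smallN f_onto kerf]; split.
- exact: dual_A_prod.
- exact: dual_strong_A_prod.
- exact: dual_A_small_quotient smallN f_onto kerf.
- exact: secondal_small_quotient smallN f_onto kerf.
Qed.
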